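(* Let $D$ be a tournament missing disjoint paths of length 2 and let $C=a_1b_1c_1,\dots,a_kb_kc_k$ be a double cycle in $\Delta(D)$. Writing $v^-$ and $v^{++}$ for $N^-_{D[K(C)]}(v)$ and $N^{++}_{D[K(C)]}(v)$, for every $t\in\{1,\dots,k\}$ (indices modulo $k$): (1) if $c_t\notin a_t^-$, then $|a_t^{++}|=|a_t^-|$ when $b_{t+1}\in a_t^-$, and $|a_t^{++}|=|a_t^-|-1$ otherwise; (2) if $a_t\notin c_t^-$, then $|c_t^{++}|=|c_t^-|$ when $b_{t+1}\in c_t^-$, and $|c_t^{++}|=|c_t^-|-1$ otherwise; (3) $|b_t^{++}|=|b_t^-|+1$ when $b_{t+1}\in b_t^-$, and $|b_t^{++}|=|b_t^-|$ otherwise.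
   Context: All digraphs are finite oriented graphs; $D[X]$ is the induced subdigraph. $N^+_H(v)$, $N^-_H(v)$ are out/in-neighborhoods in $H$; $N^{++}_H(v)$ is the set of vertices $w\notin N_H^+(v)\cup\{v\}$ with $u\to w$ in $H$ for some $u\in N_H^+(v)$. A missing edge is a pair of distinct non-adjacent vertices; the missing graph is formed by the missing edges. $D$ is a tournament missing disjoint paths of length 2 if its missing graph is a vertex-disjoint union of paths each with exactly two edges. For missing edges $\{x,y\},\{a,b\}$, $\{x,y\}$ loses to $\{a,b\}$ (written $xy\to ab$) if the endpoints can be labelled so that $x\to a$, $b\notin N^+(x)\cup N^{++}(x)$, $y\to b$, $a\notin N^+(y)\cup N^{++}(y)$ (neighborhoods in $D$). $\Delta(D)$ has the missing edges as vertices and arcs $(e,e')$ whenever $e$ loses to $e'$. For missing paths $abc$, $xyz$, $abc\to xyz$ means each of $ab,bc$ loses to each of $xy,yz$. A double cycle is a sequence $C=a_1b_1c_1,\dots,a_kb_kc_k$ ($k\ge2$) of distinct missing paths of length 2 (components of the missing graph, edges $a_ib_i,b_ic_i$) with $a_ib_ic_i\to a_{i+1}b_{i+1}c_{i+1}$ for all $i$, indices modulo $k$. $K(C)=\{a_i,b_i,c_i:1\le i\le k\}$. *)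

From mathcomp Require Import all_boot.
Set Implicit Arguments. Unset Strict Implicit. Unset Printing Implicit Defensive.

(* A digraph on a finite vertex type T is a relation D : rel T (D u v = arc u -> v). *)
Section Digraphs.
Variables (T : finType) (D : rel T).

Definition oriented : Prop :=
  (forall x, ~~ D x x) /\ (forall x y, D x y -> ~~ D y x).

Definition Nout (v : T) : {set T} := [set w | D v w].
Definition Nin (v : T) : {set T} := [set u | D u v].
Definition N2 (v : T) : {set T} :=
  [set w | [&& (w \notin Nout v), w != v & [exists u, D v u && D u w]]].

Definition missing (x y : T) : bool := [&& x != y, ~~ D x y & ~~ D y x].

(* a b c is a component of the missing graph which is a path with edges ab, bc *)
Definition mpath (a b c : T) : Prop :=
  [/\ missing a b && missing b c, a != c,
      (forall z, missing a z -> z = b),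
      (forall z, missing c z -> z = b) &
      (forall z, missing b z -> (z = a \/ z = c))].

Definition tmdp : Prop :=
  oriented /\
  forall x y, missing x y ->
    exists a b c, mpath a b c /\ x \in [:: a; b; c] /\ y \in [:: a; b; c].

Definition loses_lab (x y a b : T) : bool :=
  [&& D x a, (b \notin Nout x :|: N2 x), D y b & (a \notin Nout y :|: N2 y)].

Definition loses (x y a b : T) : bool :=
  [|| loses_lab x y a b, loses_lab y x a b, loses_lab x y b a | loses_lab y x b a].

Definition ploses (a b c x y z : T) : bool :=
  [&& loses a b x y, loses a b y z, loses b c x y & loses b c y z].

Definition double_cycle (k : nat) (a b c : 'I_k -> T) : Prop :=
  [/\ 2 <= k,
      (forall t, mpath (a t) (b t) (c t)),
      (forall t s, t != s -> [set a t; b t; c t] != [set a s; b s; c s]) &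
      (forall t, ploses (a t) (b t) (c t) (a (ordS t)) (b (ordS t)) (c (ordS t)))].

End Digraphs.

Definition KC (T : finType) (k : nat) (a b c : 'I_k -> T) : {set T} :=
  [set x | [exists t, [|| x == a t, x == b t | x == c t]]].

Definition induced (T : finType) (D : rel T) (X : {set T}) : rel T :=
  fun x y => [&& x \in X, y \in X & D x y].

(* Write P_t = {a_t, b_t, c_t}.  The four relations "loses" making up
   a_t b_t c_t -> a_(t+1) b_(t+1) c_(t+1) fix all nine arcs between P_t and
   P_(t+1) up to one global reversal, and an arc w -> u from P_(t+1) to P_t
   never extends to a 2-path u -> x -> w.  So every vertex of P_t has an
   in-neighbour in P_(t+1), and a vertex dominating P_(t+1) dominates P_t;
   going around the cycle, no vertex of K(C) dominates a whole path.
   Let v in P_t have no in-neighbour in P_t.  An in-neighbour w of v outside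
   P_t and P_(t+1) lies in v^++, since otherwise w would dominate P_t; the
   in-neighbours of v in P_(t+1) never lie in v^++; the missing partners of v
   lie in v^++ through a 2-path across P_(t+1).  Hence v^++ is the disjoint
   union of the missing partners of v and v^- minus P_(t+1), and v^- meets
   P_(t+1) in 1 or 2 vertices according as b_(t+1) is in v^- or not. *)

From mathcomp Require Import all_boot zify.
Set Implicit Arguments. Unset Strict Implicit. Unset Printing Implicit Defensive.

Lemma iter_ordS k n (s : 'I_k) : val (iter n (@ordS k) s) = (s + n) %% k.
Proof.
elim: n => [|n IHn] /=; first by rewrite addn0 modn_small.
by rewrite IHn addnS -addn1 modnDml addn1.
Qed.

Lemma iter_ordS_onto k (s t : 'I_k) : exists n, iter n (@ordS k) s = t.
Proof.
exists (t + k - s); apply/val_inj; rewrite iter_ordS.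
have -> : s + (t + k - s) = t + k by have := ltn_ord s; lia.
by rewrite modnDr modn_small.
Qed.

Lemma ordS_neq k (t : 'I_k) : 1 < k -> ordS t != t.
Proof.
move=> k_gt1; apply/eqP => /(congr1 val) /=; have := ltn_ord t.
case: (ltnP t.+1 k) => [lt_tk _|le_kt lt_tk]; first by rewrite modn_small //; lia.
have -> : t.+1 = k by lia.
by rewrite modnn; lia.
Qed.

Lemma cardsU_setD (T : finType) (M B P : {set T}) : [disjoint M & B] ->
  #|M :|: B :\: P| + #|B :&: P| = #|M| + #|B|.
Proof.
move=> dMB; rewrite cardsU -[#|B|](cardsID P) disjoint_setI0; last first.
  by apply: disjointWr dMB; apply/subsetP => x; rewrite inE => /andP[].
by rewrite cards0 subn0 -addnA [#|B :&: P| + _]addnC.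
Qed.

Section Oriented.
Variables (T : finType) (D : rel T).
Hypothesis D_asym : forall x y, D x y -> ~~ D y x.

Definition no_path2 (x y : T) : Prop := forall u, D x u -> ~~ D u y.

Lemma missingC x y : missing D x y = missing D y x.
Proof. by rewrite /missing eq_sym; case: (D x y); case: (D y x). Qed.

Lemma arc_flip x y : x != y -> ~~ missing D x y -> D y x = ~~ D x y.
Proof.
rewrite /missing => -> /=; case Dxy: (D x y); last by case: (D y x).
by rewrite (negbTE (D_asym Dxy)).
Qed.

Lemma no_path2_of_notin x y : y \notin Nout D x :|: N2 D x -> no_path2 x y.
Proof.
move=> y_out u Dxu; apply/negP => Duy; move/negP: y_out; apply.
have [E|ne_yx] := eqVneq y x; first by rewrite E (negbTE (D_asym Dxu)) in Duy.
rewrite !inE ne_yx orbC; case: (D x y) => //=; rewrite orbF.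
by apply/existsP; exists u; rewrite Dxu.
Qed.

Lemma loses_lab_arcs x y p q : loses_lab D x y p q ->
  [/\ D x p, D y q, ~~ D x q & ~~ D y p].
Proof.
case/and4P => -> + ->; rewrite !inE !negb_or.
by case/andP => -> _ /andP[-> _].
Qed.

Lemma loses_lab_no_path2 x y p q : loses_lab D x y p q ->
  no_path2 x q /\ no_path2 y p.
Proof. by case/and4P => _ /no_path2_of_notin ? _ /no_path2_of_notin. Qed.

Lemma loses_arcs x y p q : loses D x y p q ->
  [/\ D y q = D x p, D x q = ~~ D x p & D y p = ~~ D x p].
Proof.
by case/or4P => /loses_lab_arcs[-> -> /negbTE-> /negbTE->].
Qed.

Lemma loses_no_path2 x y p q : loses D x y p q ->
  {in [:: x; y] & [:: p; q], forall u w, D w u -> no_path2 u w}.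
Proof.
have lab x' y' p' q' : loses_lab D x' y' p' q' ->
    {in [:: x'; y'] & [:: p'; q'], forall u w, D w u -> no_path2 u w}.
  move=> L; have [Dxp Dyq _ _] := loses_lab_arcs L.
  have [NRxq NRyp] := loses_lab_no_path2 L; move=> u w.
  rewrite !inE => /orP[]/eqP-> /orP[]/eqP-> // Dwu.
  - by rewrite (negbTE (D_asym Dxp)) in Dwu.
  - by rewrite (negbTE (D_asym Dyq)) in Dwu.
move=> L u w Hu Hw; have Hu' : u \in [:: y; x] by move: Hu; rewrite !inE orbC.
have Hw' : w \in [:: q; p] by move: Hw; rewrite !inE orbC.
by case/or4P: L => /lab; apply.
Qed.
End Oriented.

Section MissingPath.
Variables (T : finType) (D : rel T) (a b c : T).
Hypothesis abc : mpath D a b c.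

Lemma mpath_neq : [/\ a != b, c != b & a != c].
Proof.
by case: abc => /andP[/and3P[-> _ _] /and3P[ne_bc _ _]] -> _ _ _; rewrite eq_sym.
Qed.

Lemma mpath_missing_l : [set y | missing D a y] = [set b].
Proof.
case: abc => /andP[m_ab _] _ ma _ _.
by apply/setP => y; rewrite !inE; apply/idP/eqP => [/ma|->].
Qed.

Lemma mpath_missing_r : [set y | missing D c y] = [set b].
Proof.
case: abc => /andP[_ m_bc] _ _ mc _.
by apply/setP => y; rewrite !inE; apply/idP/eqP => [/mc|->]; rewrite // missingC.
Qed.

Lemma mpath_missing_mid : [set y | missing D b y] = [set a; c].
Proof.
case: abc => /andP[m_ab m_bc] _ _ _ mb.
apply/setP => y; rewrite !inE.
by apply/idP/idP => [/mb[]->|/orP[]/eqP->]; rewrite ?eqxx ?orbT // missingC.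
Qed.

Lemma mpath_missing_ends : missing D a b /\ missing D b c.
Proof. by case: abc => /andP[]. Qed.

Lemma mpath_missing_closed x y :
  x \in [set a; b; c] -> missing D x y -> y \in [set a; b; c].
Proof.
case: abc => _ _ ma mc mb; rewrite !inE => /orP[/orP[]|]/eqP-> m.
- by rewrite (ma _ m) eqxx orbT.
- by case: (mb _ m) => ->; rewrite eqxx ?orbT.
- by rewrite (mc _ m) eqxx orbT.
Qed.

Lemma mpath_missing_mid_end x y :
  x \in [set a; b; c] -> missing D x y -> (x == b) != (y == b).
Proof.
have [ne_ab ne_cb _] := mpath_neq.
case: abc => _ _ ma mc mb; rewrite !inE => /orP[/orP[]|]/eqP-> m.
- by rewrite (ma _ m) eqxx (negbTE ne_ab).
- by case: (mb _ m) => ->; rewrite eqxx ?(negbTE ne_ab) ?(negbTE ne_cb).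
- by rewrite (mc _ m) eqxx (negbTE ne_cb).
Qed.

End MissingPath.

Section Induced.
Variables (T : finType) (D : rel T) (K : {set T}).
Local Notation H := (induced D K).

Lemma N2_induced_sub v w : v \in K -> w \in N2 H v -> w \in Nin H v \/ missing D v w.
Proof.
move=> Kv; rewrite !inE /induced Kv => /and3P[nDvw ne_wv /existsP[u /andP[_ /and3P[_ Kw _]]]].
rewrite Kw in nDvw *; case Dwv: (D w v); [left | right] => //.
by rewrite /missing eq_sym ne_wv nDvw Dwv.
Qed.

Lemma mem_N2_induced v u w : v \in K -> u \in K -> w \in K ->
  w != v -> ~~ D v w -> D v u -> D u w -> w \in N2 H v.
Proof.
move=> Kv Ku Kw ne_wv nDvw Dvu Duw; rewrite !inE /induced Kv Kw ne_wv /= (negbTE nDvw) /=.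
by apply/existsP; exists u; rewrite Ku Dvu Duw.
Qed.

Lemma no_path2_notin_N2 v w : no_path2 D v w -> w \notin N2 H v.
Proof.
move=> NRvw; rewrite !inE; apply/negP => /and3P[_ _ /existsP[u]].
by case/andP => /and3P[_ _ /NRvw/negP nDuw] /and3P[_ _].
Qed.

End Induced.

Section DoubleCycle.
Variables (T : finType) (D : rel T).
Hypothesis D_irr : forall x, ~~ D x x.
Hypothesis D_asym : forall x y, D x y -> ~~ D y x.
Variables (k : nat) (a b c : 'I_k -> T).

Definition P t : {set T} := [set a t; b t; c t].

Hypothesis k_gt1 : 1 < k.
Hypothesis P_mpath : forall t, mpath D (a t) (b t) (c t).
Hypothesis P_inj : forall t s, t != s -> P t != P s.
Hypothesis P_loses : forall t,
  ploses D (a t) (b t) (c t) (a (ordS t)) (b (ordS t)) (c (ordS t)).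

Lemma P_a t : a t \in P t. Proof. by rewrite !inE eqxx. Qed.
Lemma P_b t : b t \in P t. Proof. by rewrite !inE eqxx orbT. Qed.
Lemma P_c t : c t \in P t. Proof. by rewrite !inE eqxx !orbT. Qed.

Lemma P_missing_closed t x y : x \in P t -> missing D x y -> y \in P t.
Proof. exact: mpath_missing_closed. Qed.

Lemma P_memP t x : reflect [\/ x = a t, x = b t | x = c t] (x \in P t).
Proof.
rewrite !inE; apply: (iffP idP) => [/orP[/orP[]|]/eqP|[]->]; rewrite ?eqxx ?orbT;
  by [constructor 1 | constructor 2 | constructor 3].
Qed.

Lemma P_meet_sub t s x : x \in P t -> x \in P s -> P t \subset P s.
Proof.
have [m_ab m_bc] := mpath_missing_ends (P_mpath t).
move=> /P_memP Ptx Psx; have Psb : b t \in P s.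
  case: Ptx Psx => -> // Psx; first exact: P_missing_closed Psx m_ab.
  by apply: P_missing_closed Psx _; rewrite missingC.
apply/subsetP => y /P_memP[]-> //.
- by apply: P_missing_closed Psb _; rewrite missingC.
- exact: P_missing_closed Psb m_bc.
Qed.

Lemma P_meet t s x : x \in P t -> x \in P s -> t = s.
Proof.
move=> Ptx Psx; case: (eqVneq t s) => // /P_inj.
by rewrite eqEsubset (P_meet_sub Ptx Psx) (P_meet_sub Psx Ptx).
Qed.

Lemma P_arc_flip t x y : x \in P t -> y \notin P t -> D y x = ~~ D x y.
Proof.
move=> Px Py; apply: arc_flip => //; first by apply: contraNneq Py => <-.
by apply: contra Py; apply: P_missing_closed.
Qed.

Lemma P_next_arc_flip t u w : u \in P t -> w \in P (ordS t) -> D w u = ~~ D u w.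
Proof.
move=> Pu Pw; apply: (P_arc_flip Pu); apply: contra (ordS_neq t k_gt1).
by move/(P_meet Pw)->.
Qed.

(* The parity form of "the arcs between P_t and P_(t+1) are fixed up to one
   global reversal". *)
Lemma next_arc t u w : u \in P t -> w \in P (ordS t) ->
  D u w = (D (a t) (a (ordS t)) == ((u == b t) == (w == b (ordS t)))).
Proof.
have [ne_ab ne_cb _] := mpath_neq (P_mpath t).
have [ne_ab' ne_cb' _] := mpath_neq (P_mpath (ordS t)).
have /and4P[L1 L2 L3 L4] := P_loses t.
have [Ebb Eab Eba] := loses_arcs L1; have [Ebc Eac _] := loses_arcs L2.
have [Ecb _ Eca] := loses_arcs L3; have [Ecc _ _] := loses_arcs L4.
rewrite Eba in Ecb Eca; rewrite Eab in Ebc Eac; rewrite Ebb in Ecc.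
move=> /P_memP[]-> /P_memP[]->;
  rewrite ?eqxx ?(negbTE ne_ab) ?(negbTE ne_cb) ?(negbTE ne_ab') ?(negbTE ne_cb') /=;
  rewrite ?Ebb ?Eab ?Eba ?Ebc ?Eac ?Ecb ?Eca ?Ecc;
  by case: (D (a t) (a (ordS t))).
Qed.

Lemma next_arc_ba t u : u \in P t -> D u (b (ordS t)) = ~~ D u (a (ordS t)).
Proof.
have [ne_ab' _ _] := mpath_neq (P_mpath (ordS t)).
move=> Pu; rewrite !(next_arc Pu) ?P_a ?P_b // eqxx (negbTE ne_ab').
by case: (D _ _); case: (u == b t).
Qed.

Lemma next_arc_ca t u : u \in P t -> D u (c (ordS t)) = D u (a (ordS t)).
Proof.
have [ne_ab' ne_cb' _] := mpath_neq (P_mpath (ordS t)).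
by move=> Pu; rewrite !(next_arc Pu) ?P_a ?P_c // (negbTE ne_ab') (negbTE ne_cb').
Qed.

Lemma next_no_path2 t u w : u \in P t -> w \in P (ordS t) -> D w u -> no_path2 D u w.
Proof.
have /and4P[L1 L2 L3 L4] := P_loses t.
move=> /P_memP[]-> /P_memP[]->;
  first [ by apply: (loses_no_path2 D_asym L1); rewrite !inE eqxx ?orbT
        | by apply: (loses_no_path2 D_asym L2); rewrite !inE eqxx ?orbT
        | by apply: (loses_no_path2 D_asym L3); rewrite !inE eqxx ?orbT
        | by apply: (loses_no_path2 D_asym L4); rewrite !inE eqxx ?orbT ].
Qed.

Lemma next_in_arc t u : u \in P t -> exists2 w, w \in P (ordS t) & D w u.
Proof.
move=> Pu; case Dua: (D u (a (ordS t))).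
- by exists (b (ordS t)); rewrite ?P_b // (P_next_arc_flip Pu) ?P_b // next_arc_ba // Dua.
- by exists (a (ordS t)); rewrite ?P_a // (P_next_arc_flip Pu) ?P_a // Dua.
Qed.

Lemma missing_path2_next t x y : x \in P t -> missing D x y ->
  exists2 u, u \in P (ordS t) & D x u && D u y.
Proof.
move=> Px m_xy; have Py := P_missing_closed Px m_xy.
have mid_xy := mpath_missing_mid_end (P_mpath t) Px m_xy.
exists (if D x (a (ordS t)) then a (ordS t) else b (ordS t)).
  by case: ifP => _; [exact: P_a | exact: P_b].
have [ne_ab' _ _] := mpath_neq (P_mpath (ordS t)).
case: ifP => Dxa; [have Pu := P_a (ordS t) | have Pu := P_b (ordS t)];
  rewrite (P_next_arc_flip Py Pu) (next_arc Px Pu) (next_arc Py Pu);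
  move: Dxa; rewrite (next_arc Px (P_a _)) ?eqxx ?(negbTE ne_ab');
  by move: mid_xy; case: (D _ _); case: (x == b t); case: (y == b t).
Qed.

Lemma dominates_prev t x :
  {in P (ordS t), forall y, D x y} -> {in P t, forall y, D x y}.
Proof.
move=> Dx y Py; case Px: (x \in P t).
  have [w Pw Dwx] := next_in_arc Px.
  by have := D_asym Dwx; rewrite Dx.
rewrite (P_arc_flip Py (negbT Px)); apply/negP => Dyx.
have [w Pw Dwy] := next_in_arc Py.
by have := next_no_path2 Py Pw Dwy Dyx; rewrite Dx.
Qed.

Lemma P_not_dominated t s x : x \in P s -> ~ {in P t, forall y, D x y}.
Proof.
move=> Px; have [n <-] := iter_ordS_onto s t.
elim: n => [|n IHn] /= Dx; first by have := D_irr x; rewrite Dx.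
exact: IHn (dominates_prev Dx).
Qed.

Local Notation K := (KC a b c).
Local Notation H := (induced D K).

Lemma P_sub_K t : P t \subset K.
Proof.
apply/subsetP => x Px; rewrite inE; apply/existsP; exists t.
by case/P_memP: Px => ->; rewrite eqxx ?orbT.
Qed.

Lemma K_P x : x \in K -> exists t, x \in P t.
Proof.
rewrite inE => /existsP[t xt]; exists t.
by apply/P_memP; case/or3P: xt => /eqP; [constructor 1 | constructor 2 | constructor 3].
Qed.

Lemma Nin_far_in_N2 t v w : v \in P t -> {in P t, forall y, ~~ D y v} ->
  w \in Nin H v -> w \notin P t -> w \notin P (ordS t) -> w \in N2 H v.
Proof.
move=> Pv noin; rewrite inE => /and3P[Kw Kv Dwv] nPw nPw'.
(* Otherwise w dominates every out-neighbour of v, hence all of P t. *)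
apply/negPn/negP => wN2; have [s Psw] := K_P Kw.
have ne_wv : w != v by apply: contraNneq nPw => ->.
have Dw_of_Dv u : u \in K -> D v u -> D w u = ~~ D u w -> D w u.
  move=> Ku Dvu ->; apply/negP => Duw.
  by case/negP: wN2; apply: (mem_N2_induced Kv Ku Kw ne_wv (D_asym Dwv)).
apply: (P_not_dominated Psw (t := t)) => y Py.
have [->//|ne_yv] := eqVneq y v.
case Dvy: (D v y).
  by apply: (Dw_of_Dv _ _ Dvy); [exact: (subsetP (P_sub_K t) _ Py) | exact: P_arc_flip Py nPw].
have m_vy : missing D v y by rewrite /missing eq_sym ne_yv Dvy noin.
have [u Pu /andP[Dvu Duy]] := missing_path2_next Pv m_vy.
have Dwu : D w u.
  by apply: (Dw_of_Dv _ _ Dvu); [exact: (subsetP (P_sub_K _) _ Pu) | exact: P_arc_flip Pu nPw'].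
rewrite (P_arc_flip Py nPw); apply/negP => Dyw.
by have := next_no_path2 Py Pu Duy Dyw; rewrite Dwu.
Qed.

Lemma N2_decomposition t v : v \in P t -> {in P t, forall y, ~~ D y v} ->
  N2 H v = [set y | missing D v y] :|: Nin H v :\: P (ordS t).
Proof.
move=> Pv noin; have Kv := subsetP (P_sub_K t) _ Pv.
apply/setP => w; rewrite in_setU in_setD [w \in [set _ | _]]inE.
apply/idP/idP => [w_N2|].
  case: (N2_induced_sub Kv w_N2) => [w_Nin|->//]; rewrite w_Nin andbT; apply/orP; right.
  apply: contraL w_N2 => Pw'; apply: no_path2_notin_N2.
  by move: w_Nin; rewrite inE => /and3P[_ _ /(next_no_path2 Pv Pw')].
case/orP => [m_vw | /andP[nPw' w_Nin]].
  have [u Pu /andP[Dvu Duw]] := missing_path2_next Pv m_vw.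
  have Pw := P_missing_closed Pv m_vw.
  move: m_vw; rewrite /missing eq_sym => /and3P[ne_wv nDvw _].
  exact: (mem_N2_induced Kv (subsetP (P_sub_K _) _ Pu) (subsetP (P_sub_K _) _ Pw)).
apply: (Nin_far_in_N2 Pv noin w_Nin _ nPw'); apply: contraL w_Nin => Pw.
by rewrite inE /induced (negbTE (noin w Pw)) !andbF.
Qed.
Lemma Nin_P s t x y : x \in P s -> y \in P t -> (x \in Nin H y) = D x y.
Proof.
by move=> Px Py; rewrite inE /induced (subsetP (P_sub_K _) _ Px) (subsetP (P_sub_K _) _ Py).
Qed.

Lemma card_Nin_next t v : v \in P t ->
  #|Nin H v :&: P (ordS t)| = if b (ordS t) \in Nin H v then 1 else 2.
Proof.
move=> Pv; have [_ _ ne_ac'] := mpath_neq (P_mpath (ordS t)).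
have Nin_next w : w \in P (ordS t) -> (w \in Nin H v) = ~~ D v w.
  by move=> Pw; rewrite (Nin_P Pw Pv); exact: P_next_arc_flip Pv Pw.
have -> : Nin H v :&: P (ordS t) = [set w in P (ordS t) | ~~ D v w].
  apply/setP => w; rewrite in_setI [in RHS]inE andbC.
  by case Pw: (w \in P (ordS t)) => //=; apply: Nin_next.
rewrite Nin_next ?P_b // (next_arc_ba Pv) negbK.
have -> : 2 = #|[set a (ordS t); c (ordS t)]| by rewrite cards2 ne_ac'.
rewrite -(cards1 (b (ordS t))).
case Dva: (D v (a (ordS t))); apply: eq_card => w; rewrite inE.
- rewrite in_set1; apply/andP/eqP => [[/P_memP[]->]|->]; rewrite ?P_b //;
    by rewrite ?(next_arc_ba Pv) ?(next_arc_ca Pv) Dva.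
- rewrite in_set2; apply/andP/orP => [[/P_memP[]->]|[]/eqP->]; rewrite ?P_a ?P_c ?eqxx ?orbT //;
    by rewrite ?(next_arc_ba Pv) ?(next_arc_ca Pv) Dva //=; auto.
Qed.

Lemma card_N2_Nin t v : v \in P t -> {in P t, forall y, ~~ D y v} ->
  #|N2 H v| + (if b (ordS t) \in Nin H v then 1 else 2) =
  #|[set y | missing D v y]| + #|Nin H v|.
Proof.
move=> Pv noin; rewrite -(card_Nin_next Pv) (N2_decomposition Pv noin) cardsU_setD //.
rewrite disjoints_subset; apply/subsetP => y; rewrite !inE => /and3P[_ _ nDyv].
by rewrite /induced (negbTE nDyv) !andbF.
Qed.

Lemma card_N2_a t : c t \notin Nin H (a t) ->
  if b (ordS t) \in Nin H (a t)
  then #|N2 H (a t)| = #|Nin H (a t)|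
  else #|N2 H (a t)| + 1 = #|Nin H (a t)|.
Proof.
have [m_ab _] := mpath_missing_ends (P_mpath t).
rewrite (Nin_P (P_c t) (P_a t)) => nDca.
have noin : {in P t, forall y, ~~ D y (a t)}.
  by move=> y /P_memP[]->; rewrite ?D_irr //; case/and3P: m_ab.
have := card_N2_Nin (P_a t) noin.
by rewrite (mpath_missing_l (P_mpath t)) cards1; case: ifP => _; lia.
Qed.

Lemma card_N2_c t : a t \notin Nin H (c t) ->
  if b (ordS t) \in Nin H (c t)
  then #|N2 H (c t)| = #|Nin H (c t)|
  else #|N2 H (c t)| + 1 = #|Nin H (c t)|.
Proof.
have [_ m_bc] := mpath_missing_ends (P_mpath t).
rewrite (Nin_P (P_a t) (P_c t)) => nDac.
have noin : {in P t, forall y, ~~ D y (c t)}.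
  by move=> y /P_memP[]->; rewrite ?D_irr //; case/and3P: m_bc.
have := card_N2_Nin (P_c t) noin.
by rewrite (mpath_missing_r (P_mpath t)) cards1; case: ifP => _; lia.
Qed.

Lemma card_N2_b t :
  if b (ordS t) \in Nin H (b t)
  then #|N2 H (b t)| = #|Nin H (b t)| + 1
  else #|N2 H (b t)| = #|Nin H (b t)|.
Proof.
have [m_ab m_bc] := mpath_missing_ends (P_mpath t).
have [_ _ ne_ac] := mpath_neq (P_mpath t).
have noin : {in P t, forall y, ~~ D y (b t)}.
  by move=> y /P_memP[]->; rewrite ?D_irr //; [case/and3P: m_ab | case/and3P: m_bc].
have := card_N2_Nin (P_b t) noin.
by rewrite (mpath_missing_mid (P_mpath t)) cards2 ne_ac; case: ifP => _; lia.
Qed.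

End DoubleCycle.

Theorem mainTheorem18 (T : finType) (D : rel T) (k : nat) (a b c : 'I_k -> T) :
  tmdp D -> double_cycle D a b c ->
  let H := induced D (KC a b c) in
  forall t : 'I_k,
    [/\ c t \notin Nin H (a t) ->
          (if b (ordS t) \in Nin H (a t)
           then #|N2 H (a t)| = #|Nin H (a t)|
           else #|N2 H (a t)| + 1 = #|Nin H (a t)|),
        a t \notin Nin H (c t) ->
          (if b (ordS t) \in Nin H (c t)
           then #|N2 H (c t)| = #|Nin H (c t)|
           else #|N2 H (c t)| + 1 = #|Nin H (c t)|) &
        (if b (ordS t) \in Nin H (b t)
         then #|N2 H (b t)| = #|Nin H (b t)| + 1
         else #|N2 H (b t)| = #|Nin H (b t)|)].
Proof.
move=> [[D_irr D_asym] _] [k_gt1 P_mpath P_inj P_loses] H t.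
split.
- exact: (card_N2_a D_irr D_asym k_gt1 P_mpath P_inj P_loses).
- exact: (card_N2_c D_irr D_asym k_gt1 P_mpath P_inj P_loses).
- exact: (card_N2_b D_irr D_asym k_gt1 P_mpath P_inj P_loses).
Qed.
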